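(* Let $q$ be an odd prime, $n \geq 1$ an integer, $v = 3q^n$, and $k$ an odd positive integer. If there are integers $a_1, \ldots, a_k$ with $1 \leq a_j < v$ such that $\prod_{j=1}^k a_j = \prod_{j=1}^k (v - a_j)$, then there is an integer $m$ such that $2^m \equiv (-1)^{m+1} \pmod q$.
   Context: For a negative integer $m$, $2^m$ is understood in $\mathbb{Z}/q\mathbb{Z}$ as the $|m|$-th power of the multiplicative inverse of $2$ modulo $q$. *)

From mathcomp Require Import all_boot all_order all_algebra.
Set Implicit Arguments. Unset Strict Implicit. Unset Printing Implicit Defensive.

From mathcomp Require Import all_boot all_order all_algebra.
From mathcomp Require Import ring.
Set Implicit Arguments. Unset Strict Implicit. Unset Printing Implicit Defensive.
Import GRing.Theory Num.Theory.
Local Open Scope ring_scope.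

(* Write each factor as [a = q^e b] with [q] not dividing [b]. Then [v - a = q^e c]
   with the same [e], and modulo [q] one has [c = -(-2)^m b] for some [m]: if
   [e < n] then [c = 3 q^(n-e) - b = -b], and if [e = n] then [b] is [1] or [2] and
   [c] is [2] or [1]. Cancelling the powers of [q] in the product identity leaves
   [prod b = prod c = (-1)^k (-2)^M prod b] in F_q, hence [(-2)^M = -1] since [k] is
   odd, i.e. [2^M = (-1)^(M+1)]. *)

Lemma eq_prod_cancel (I : finType) (b c d : I -> nat) :
  (forall i, 0 < d i)%N ->
  (\prod_i (d i * b i) = \prod_i (d i * c i))%N -> (\prod_i b i = \prod_i c i)%N.
Proof.
move=> d_gt0; rewrite !big_split /= => /eqP.
by rewrite eqn_pmul2l ?prodn_gt0 // => /eqP.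
Qed.

Lemma prod_opp_expfz (F : fieldType) (I : finType) (x : F) (m : I -> int) :
  x != 0 -> odd #|I| -> \prod_i - x ^ m i = - x ^ (\sum_i m i).
Proof.
move=> x_neq0 oddI; rewrite prodrN -signr_odd oddI expr1 mulN1r.
by rewrite (big_morph _ (fun u v => expfzDr u v x_neq0) (expr0z x)).
Qed.

Lemma expfz_eqN1_opp (F : fieldType) (x : F) (m : int) :
  (- x) ^ m = -1 -> x ^ m = (-1) ^ (m + 1).
Proof.
move=> Nx_m; rewrite expfzDr ?oppr_eq0 ?oner_eq0 // expr1z -[X in _ * X]Nx_m.
by rewrite -expfzMl mulN1r opprK.
Qed.

Section OddPrimeField.

Variable q : nat.
Hypotheses (q_prime : prime q) (q_odd : odd q).

Lemma natrFp_eq0 (x : nat) : ((x%:R : 'F_q) == 0) = (q %| x)%N.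
Proof. by rewrite (dvdn_pcharf (pchar_Fp q_prime)). Qed.

Lemma two_neq0_Fp : (2%:R : 'F_q) != 0.
Proof.
rewrite natrFp_eq0 dvdn_prime2 //.
by apply: contraTneq q_odd => ->.
Qed.

Lemma p'part_neq0_Fp (x : nat) : ((x`_q^')%:R : 'F_q) != 0.
Proof. by rewrite natrFp_eq0 -p'natE // part_pnat. Qed.

Lemma expq_gt0 (e : nat) : (0 < q ^ e)%N.
Proof. by rewrite expn_gt0 prime_gt0. Qed.

Variable n : nat.

Lemma top_valuation_p'part (x : nat) : (0 < x < 3 * q ^ n)%N ->
  (n <= logn q x)%N -> logn q x = n /\ (x`_q^' < 3)%N.
Proof.
case/andP=> x_gt0 x_lt n_le_e.
have q_ge3 : (3 <= q)%N.
  by case: q q_odd (prime_gt1 q_prime) => [|[|[|]]].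
have xE : x = (x`_q^' * q ^ logn q x)%N by rewrite -p_part mulnC partnC.
have b_gt0 := part_gt0 q^' x.
have e_eq : logn q x = n.
  apply/eqP; rewrite eqn_leq n_le_e andbT leqNgt; apply: contraTN x_lt => n_lt_e.
  rewrite -leqNgt xE; apply: leq_trans (leq_pmull _ b_gt0).
  by rewrite (leq_trans _ (leq_pexp2l (prime_gt0 q_prime) n_lt_e)) // expnS leq_mul2r q_ge3 orbT.
rewrite e_eq in xE; split=> //.
by rewrite -(ltn_pmul2r (expq_gt0 n)) -xE.
Qed.

Lemma complement_p'part (x : nat) : (0 < x < 3 * q ^ n)%N ->
  exists c (m : int), (3 * q ^ n - x = x`_q * c)%N /\
    (c%:R : 'F_q) = - (-2) ^ m * (x`_q^')%:R.
Proof.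
move=> x_range; have [x_gt0 x_lt] := andP x_range.
rewrite p_part; set b := (x`_q^')%N; set e := logn q x.
have xE : x = (b * q ^ e)%N by rewrite -p_part mulnC partnC.
case: (ltnP e n) => [e_lt_n | n_le_e].
  have nE : n = (n - e + e)%N by rewrite subnK // ltnW.
  have b_le : (b <= 3 * q ^ (n - e))%N.
    rewrite -(leq_pmul2r (expq_gt0 e)).
    by rewrite -mulnA -expnD -nE -xE ltnW.
  exists (3 * q ^ (n - e) - b)%N, 0; split.
    by rewrite [RHS]mulnC {1}xE {1}nE expnD mulnA mulnBl.
  have q0 : (q%:R : 'F_q) = 0 by apply/eqP; rewrite natrFp_eq0.
  rewrite natrB // natrM natrX q0 expr0n subn_eq0 leqNgt e_lt_n mulr0.
  by rewrite expr0z sub0r mulN1r.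
have [e_eq b_lt3] := top_valuation_p'part x_range n_le_e.
rewrite -/e -/b in e_eq b_lt3; rewrite {}xE {}e_eq.
have b_gt0 : (0 < b)%N := part_gt0 q^' x.
clearbody b.
case: b b_gt0 b_lt3 => [|[|[|]]] // _ _.
- exists 2%N, 1; split; first by rewrite [RHS]mulnC mul1n -{2}(mul1n (q ^ n)%N) -mulnBl.
  by rewrite expr1z; ring.
- exists 1%N, (-1); split; first by rewrite [RHS]mulnC -mulnBl.
  by rewrite exprN1; field; rewrite oppr_eq0 two_neq0_Fp.
Qed.

End OddPrimeField.

Theorem lemma4p11 (q n k : nat) (a : 'I_k -> nat) :
  prime q -> odd q -> (1 <= n)%N -> odd k ->
  (forall j, (1 <= a j)%N /\ (a j < 3 * q ^ n)%N) ->
  (\prod_(j < k) a j = \prod_(j < k) (3 * q ^ n - a j))%N ->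
  exists m : int, (2%:R : 'F_q) ^ m = (-1) ^ (m + 1).
Proof.
move=> q_prime q_odd _ k_odd a_range a_prod.
have /fin_all_exists[c /fin_all_exists[m cm]] : forall j, exists c (m : int),
    (3 * q ^ n - a j = (a j)`_q * c)%N /\ (c%:R : 'F_q) = - (-2) ^ m * ((a j)`_q^')%:R.
  by move=> j; apply: complement_p'part => //; case: (a_range j) => -> ->.
have bc_prod : (\prod_j (a j)`_q^' = \prod_j c j)%N.
  apply: (@eq_prod_cancel _ _ _ (fun j => (a j)`_q)%N) => [j|]; first exact: part_gt0.
  rewrite -(eq_bigr _ (fun j _ => (cm j).1)).
  by rewrite -(eq_bigr _ (fun j _ => partnC q (a_range j).1)) in a_prod.
have b_prod_neq0 : (\prod_j ((a j)`_q^')%:R : 'F_q) != 0.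
  by apply/prodf_neq0 => j _; apply: p'part_neq0_Fp.
have m2_neq0 : (-2 : 'F_q) != 0 by rewrite oppr_eq0 two_neq0_Fp.
have b_prod_eq : \prod_j ((a j)`_q^')%:R
    = - (-2) ^ (\sum_j m j) * \prod_j ((a j)`_q^')%:R :> 'F_q.
  rewrite -(prod_opp_expfz _ m2_neq0) ?card_ord // -big_split -natr_prod bc_prod natr_prod.
  by apply: eq_bigr => j _; rewrite (cm j).2.
exists (\sum_j m j); apply: expfz_eqN1_opp; apply: (mulIf b_prod_neq0).
by rewrite mulN1r {2}b_prod_eq mulNr opprK.
Qed.
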